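(* Let $n\ge 1$ and let $U$ be a matchgate unitary on $n$ qubits with associated orthogonal matrix $\mathbf{u}\in \mathbf{SO}(2n)$, i.e. $U^\dagger c_\mu U=\sum_{\nu=1}^{2n}u_{\mu\nu}c_\nu$ for all $\mu\in\{1,\dots,2n\}$. Let $\vec\eta$ and $\vec\alpha$ be Majorana configurations and let $a,b$ be integers such that $A\equiv i^aC_{\vec\eta}$ and $B\equiv i^bC_{\vec\alpha}$ are Hermitian (Pauli observables). Then $$\frac{1}{2^{n+2}}\big\|[A,U^\dagger BU]\big\|^2=\frac12\Big\{1+(-1)^{|\vec\alpha||\vec\eta|+1}\det\big[\mathbf{u}_{\vec\alpha[2n]}(\mathbf{I}-2\mathbf{P}_{\vec\eta})\mathbf{u}^{\mathrm T}_{[2n]\vec\alpha}\big]\Big\},$$ where $\|\cdot\|$ is the Frobenius norm, $\mathbf I$ is the $2n\times 2n$ identity, and $\mathbf{P}_{\vec\eta}$ is the $2n\times 2n$ diagonal matrix with $(\mathbf{P}_{\vec\eta})_{jk}=\delta_{jk}$ if $j,k\in\vec\eta$ and $0$ otherwise (the projector onto the modes $\vec\eta$).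
   Context: On $n$ qubits with Pauli operators $X_k,Y_k,Z_k$, the Majorana operators are $c_{2k-1}=Z_1\cdots Z_{k-1}X_k$ and $c_{2k}=Z_1\cdots Z_{k-1}Y_k$ for $k=1,\dots,n$; they satisfy $c_\mu^2=I$, $c_\mu c_\nu=-c_\nu c_\mu$ for $\mu\ne\nu$. A Majorana configuration is an ordered tuple $\vec\alpha=(\alpha_1,\dots,\alpha_k)$ with $1\le\alpha_1<\alpha_2<\dots<\alpha_k\le 2n$, of degree $|\vec\alpha|=k$; the configuration operator is $C_{\vec\alpha}=c_{\alpha_1}c_{\alpha_2}\cdots c_{\alpha_k}$. $[2n]=(1,2,\dots,2n)$. For a matrix $\mathbf u$ and tuples $\vec\alpha,\vec\beta$, $\mathbf{u}_{\vec\alpha\vec\beta}$ is the submatrix with $(\mathbf{u}_{\vec\alpha\vec\beta})_{jk}=u_{\alpha_j\beta_k}$, and $\mathbf{u}^{\mathrm T}_{\vec\beta\vec\alpha}$ denotes $(\mathbf{u}_{\vec\alpha\vec\beta})^{\mathrm T}$. A matchgate unitary is a unitary $U$ on $n$ qubits (equivalently, a circuit of nearest-neighbour matchgates, i.e. generated by Hamiltonians quadratic in the Majorana operators) for which there is $\mathbf u\in\mathbf{SO}(2n)$ with $U^\dagger c_\mu U=\sum_\nu u_{\mu\nu}c_\nu$. The Frobenius norm is $\|O\|^2=\mathrm{tr}(O^\dagger O)$. *)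

(* Scalars: an arbitrary numClosedFieldType C (e.g. algC, or
   R[i] for a real closed field R, in particular the complex numbers). *)
From HB Require Import structures.
From mathcomp Require Import all_boot all_order all_algebra.
From mathcomp Require Import mxtens.
Set Implicit Arguments. Unset Strict Implicit. Unset Printing Implicit Defensive.
Import Order.TTheory GRing.Theory Num.Theory.
Local Open Scope ring_scope.

(* dim2 n = 2^n, defined recursively so that the Kronecker product
   'M_2 *t 'M_(dim2 n) has type 'M_(dim2 n.+1) without casts. *)
Fixpoint dim2 (n : nat) : nat := if n is k.+1 then (2 * dim2 k)%N else 1%N.

Section Qubits.
Variable C : numClosedFieldType.

Definition adj {m p : nat} (A : 'M[C]_(m, p)) : 'M[C]_(p, m) := (map_mx Num.conj A)^T.

(* single-qubit Pauli matrices, basis order |0>, |1> *)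
Definition PauliI : 'M[C]_2 := 1%:M.
Definition PauliX : 'M[C]_2 := \matrix_(i < 2, j < 2) (if i == j then 0 else 1).
Definition PauliY : 'M[C]_2 :=
  \matrix_(i < 2, j < 2)
    (if i == j then 0 else if (i : nat) == 0%N then - 'i else 'i).
Definition PauliZ : 'M[C]_2 :=
  \matrix_(i < 2, j < 2) (if i == j then (if (i : nat) == 0%N then 1 else -1) else 0).

(* tensor product f 0 (x) f 1 (x) ... (x) f (n-1); f k acts on qubit k+1 *)
Fixpoint pauli_string (n : nat) (f : nat -> 'M[C]_2) : 'M[C]_(dim2 n) :=
  match n return 'M[C]_(dim2 n) with
  | 0 => 1%:M
  | k.+1 => f 0%N *t pauli_string k (fun j => f j.+1)
  end.

(* Majorana operators, 0-based index mu : 'I_(2n).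
   mu = 2(k-1)   (i.e. c_{2k-1}) = Z_1 ... Z_{k-1} X_k,
   mu = 2(k-1)+1 (i.e. c_{2k})   = Z_1 ... Z_{k-1} Y_k. *)
Definition majorana (n : nat) (mu : 'I_(2 * n)) : 'M[C]_(dim2 n) :=
  let q := (mu %/ 2)%N in
  pauli_string n (fun j =>
    if (j < q)%N then PauliZ
    else if j == q then (if odd mu then PauliY else PauliX)
    else PauliI).

Definition majorana_config (n : nat) (s : seq 'I_(2 * n)) : bool :=
  sorted (fun x y : 'I_(2 * n) => (x < y)%N) s.

Definition config_op (n : nat) (s : seq 'I_(2 * n)) : 'M[C]_(dim2 n) :=
  foldr (fun mu M => majorana mu *m M) 1%:M s.

Definition rowsub_seq (n : nat) (u : 'M[C]_(2 * n)) (s : seq 'I_(2 * n))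
  : 'M[C]_(size s, 2 * n) :=
  \matrix_(j < size s, l < 2 * n) u (nth l s j) l.

Definition proj_modes (n : nat) (s : seq 'I_(2 * n)) : 'M[C]_(2 * n) :=
  diag_mx (\row_(j < 2 * n) (if j \in s then 1 else 0)).

Definition frob2 {m : nat} (O : 'M[C]_m) : C := \tr (adj O *m O).

Definition commutator {m : nat} (A B : 'M[C]_m) : 'M[C]_m := A *m B - B *m A.

End Qubits.

(* Write c(x) for the Majorana field sum_nu x_nu c_nu and <x, y> for the
   bilinear (unconjugated) dot product.  The anticommutation relations read
   c(x) c(y) + c(y) c(x) = 2 <x, y>, and the matchgate U sends C_alpha to the
   product of the c(u_mu), mu in alpha, while C_eta sends c(x) to c(x D) with
   D = (-1)^|eta| (I - 2 P_eta).  Since A and X = U^dag B U are Hermitian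
   involutions, ||[A, X]||^2 = 2 tr 1 - 2 tr (A X A X), and A X A X is, up to
   the phase i^(2b), a product c(v_1) ... c(v_k) c(w_1) ... c(w_k) with
   v_j = w_j D and the w_j orthonormal rows of u.  Moving c(v_1) around the
   product and using cyclicity of the trace yields the Laplace expansion of a
   determinant: tr = (-1)^(k(k-1)/2) tr 1 det(<v_i, w_j>).  Finally the
   Hermiticity of B says exactly that i^(2b) cancels (-1)^(k(k-1)/2), the
   sign produced by reversing C_alpha. *)
From HB Require Import structures.
From mathcomp Require Import all_boot all_order all_algebra.
From mathcomp Require Import mxtens zify ring.
Set Implicit Arguments. Unset Strict Implicit. Unset Printing Implicit Defensive.
Import Order.TTheory GRing.Theory Num.Theory.
Local Open Scope ring_scope.

Lemma dim2E n : dim2 n = (2 ^ n)%N.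
Proof. by elim: n => //= n ->; rewrite expnS. Qed.

Section Adjoint.
Variable C : numClosedFieldType.

Lemma adjK m p (A : 'M[C]_(m, p)) : adj (adj A) = A.
Proof. by apply/matrixP=> i j; rewrite !mxE conjCK. Qed.

Lemma adj_mulmx m p q (A : 'M[C]_(m, p)) (B : 'M[C]_(p, q)) :
  adj (A *m B) = adj B *m adj A.
Proof. by rewrite /adj map_mxM trmx_mul. Qed.

Lemma adj_scale m p (a : C) (A : 'M[C]_(m, p)) : adj (a *: A) = a^* *: adj A.
Proof. by apply/matrixP=> i j; rewrite !mxE rmorphM. Qed.

Lemma adj_sub m p (A B : 'M[C]_(m, p)) : adj (A - B) = adj A - adj B.
Proof. by apply/matrixP=> i j; rewrite !mxE rmorphB. Qed.

Lemma adj_scalar1 m : adj (1%:M : 'M[C]_m) = 1%:M.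
Proof. by apply/matrixP=> i j; rewrite !mxE eq_sym rmorph_nat. Qed.

Lemma adj_tensmx m n p q (A : 'M[C]_(m, n)) (B : 'M[C]_(p, q)) :
  adj (A *t B) = adj A *t adj B.
Proof. by apply/matrixP=> i j; rewrite !mxE rmorphM. Qed.

Lemma ipow_unit (a : int) : ('i ^ a)^* * 'i ^ a = 1 :> C.
Proof.
have i_unit : ('i : C) \is a GRing.unit by rewrite unitfE neq0Ci.
by rewrite (rmorphXz _ _ i_unit) /= conjCi -expfzMl mulNr -expr2 sqrCi opprK exp1rz.
Qed.

Lemma adj_conj m (U B : 'M[C]_m) : adj (adj U *m B *m U) = adj U *m adj B *m U.
Proof. by rewrite !adj_mulmx adjK mulmxA. Qed.

Lemma conj_involution m (U B : 'M[C]_m) : U *m adj U = 1%:M -> B *m B = 1%:M ->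
  (adj U *m B *m U) *m (adj U *m B *m U) = 1%:M.
Proof.
move=> unitU BB; rewrite !mulmxA -[_ *m U *m adj U]mulmxA unitU mulmx1.
by rewrite -[_ *m B *m B]mulmxA BB mulmx1 (mulmx1C unitU).
Qed.

Lemma frob2_commutator_involution m (A X : 'M[C]_m) :
  adj A = A -> adj X = X -> A *m A = 1%:M -> X *m X = 1%:M ->
  frob2 (commutator A X) = 2 * (\tr (1%:M : 'M_m) - \tr (A *m X *m A *m X)).
Proof.
move=> hA hX AA XX; rewrite /frob2 /commutator adj_sub !adj_mulmx hA hX.
have tr_XAAX : \tr (X *m A *m (A *m X)) = \tr (1%:M : 'M_m).
  by rewrite mulmxA -[X *m A *m A]mulmxA AA mulmx1 XX.
have tr_AXXA : \tr (A *m X *m (X *m A)) = \tr (1%:M : 'M_m).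
  by rewrite mulmxA -[A *m X *m X]mulmxA XX mulmx1 AA.
have tr_XAXA : \tr (X *m A *m (X *m A)) = \tr (A *m X *m A *m X).
  by rewrite !mulmxA -!mulmxA mxtrace_mulC !mulmxA.
rewrite mulmxBl !mulmxBr !raddfB /= tr_XAAX tr_AXXA tr_XAXA !mulmxA.
ring.
Qed.

End Adjoint.

Section PauliStrings.
Variable C : numClosedFieldType.

Lemma tensmx11 m p : (1%:M : 'M[C]_m) *t (1%:M : 'M[C]_p) = 1%:M.
Proof.
apply/matrixP=> i j.
case: (mxtens_indexP i) => i0 i1; case: (mxtens_indexP j) => j0 j1.
rewrite tensmxE !mxE -natrM mulnb; congr (_ %:R); congr nat_of_bool.
apply/andP/eqP => [[/eqP -> /eqP ->] // | /(can_inj (@mxtens_indexK _ _))].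
by case=> -> ->.
Qed.

Lemma tensNmx m n p q (A : 'M[C]_(m, n)) (B : 'M[C]_(p, q)) :
  (- A) *t B = - (A *t B).
Proof. by apply/matrixP=> i j; rewrite !mxE mulNr. Qed.

Lemma tensmxN m n p q (A : 'M[C]_(m, n)) (B : 'M[C]_(p, q)) :
  A *t (- B) = - (A *t B).
Proof. by apply/matrixP=> i j; rewrite !mxE mulrN. Qed.

Implicit Types f g : nat -> 'M[C]_2.

Lemma pauli_string_mul n f g :
  pauli_string n f *m pauli_string n g = pauli_string n (fun j => f j *m g j).
Proof. by elim: n f g => [|n IHn] f g /=; rewrite ?mul1mx // tensmx_mul IHn. Qed.

Lemma eq_pauli_string n f g :
  (forall j, (j < n)%N -> f j = g j) -> pauli_string n f = pauli_string n g.
Proof.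
elim: n f g => [|n IHn] f g efg //=.
by rewrite efg // (IHn _ (fun j => g j.+1)) // => j lt_jn; apply: efg.
Qed.

Lemma pauli_string1 n f :
  (forall j, (j < n)%N -> f j = 1%:M) -> pauli_string n f = 1%:M.
Proof.
elim: n f => [|n IHn] f f1 //=.
by rewrite f1 // IHn ?tensmx11 // => j lt_jn; apply: f1.
Qed.

Lemma pauli_stringN n f g k : (k < n)%N ->
  (forall j, (j < n)%N -> j != k -> f j = g j) -> f k = - g k ->
  pauli_string n f = - pauli_string n g.
Proof.
elim: n f g k => [|n IHn] f g [|k] //= lt_kn efg fgk.
  rewrite fgk tensNmx (@eq_pauli_string _ _ (fun j => g j.+1)) //.
  by move=> j lt_jn; apply: efg.
rewrite efg // (IHn _ (fun j => g j.+1) k) ?tensmxN //.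
by move=> j lt_jn ne_jk; apply: efg.
Qed.

Lemma adj_pauli_string n f :
  adj (pauli_string n f) = pauli_string n (fun j => adj (f j)).
Proof. by elim: n f => [|n IHn] f /=; rewrite ?adj_scalar1 // adj_tensmx IHn. Qed.

Ltac pauli_calc :=
  rewrite /adj /PauliI; apply/matrixP;
  case=> [[|[|//]] ?]; case=> [[|[|//]] ?];
  rewrite !mxE ?big_ord_recl ?big_ord0 /= ?mxE /=;
  rewrite ?(conjCi, rmorphN, rmorph0, rmorph1, mulr0, mul0r, mulr1, mul1r,
            addr0, add0r, mulrN, mulNr, opprK, oppr0) /= ?conjCi;
  rewrite -?expr2 ?sqrCi ?opprK.

Lemma PauliX_sqr : PauliX C *m PauliX C = 1%:M. Proof. by pauli_calc. Qed.
Lemma PauliY_sqr : PauliY C *m PauliY C = 1%:M. Proof. by pauli_calc. Qed.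
Lemma PauliZ_sqr : PauliZ C *m PauliZ C = 1%:M. Proof. by pauli_calc. Qed.
Lemma PauliXZ : PauliX C *m PauliZ C = - (PauliZ C *m PauliX C). Proof. by pauli_calc. Qed.
Lemma PauliYZ : PauliY C *m PauliZ C = - (PauliZ C *m PauliY C). Proof. by pauli_calc. Qed.
Lemma PauliXY : PauliX C *m PauliY C = - (PauliY C *m PauliX C). Proof. by pauli_calc. Qed.
Lemma adj_PauliI : adj (PauliI C) = PauliI C. Proof. by pauli_calc. Qed.
Lemma adj_PauliX : adj (PauliX C) = PauliX C. Proof. by pauli_calc. Qed.
Lemma adj_PauliY : adj (PauliY C) = PauliY C. Proof. by pauli_calc. Qed.
Lemma adj_PauliZ : adj (PauliZ C) = PauliZ C. Proof. by pauli_calc. Qed.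

End PauliStrings.

Section Majorana.
Variables (C : numClosedFieldType) (n : nat).
Implicit Types (mu nu : 'I_(2 * n)) (s : seq 'I_(2 * n)).
Local Notation c := (@majorana C n).

Lemma majorana_sqr mu : c mu *m c mu = 1%:M.
Proof.
rewrite /majorana pauli_string_mul pauli_string1 // => j _.
case: ifP => _; first exact: PauliZ_sqr.
case: ifP => _; last by rewrite /PauliI mul1mx.
by case: (odd mu); [exact: PauliY_sqr | exact: PauliX_sqr].
Qed.

Lemma majorana_anticomm_lt mu nu : (mu < nu)%N -> c mu *m c nu = - (c nu *m c mu).
Proof.
move=> lt_mu_nu; rewrite /majorana !pauli_string_mul.
set q := (mu %/ 2)%N; set r := (nu %/ 2)%N.
have le_qr : (q <= r)%N by rewrite leq_div2r // ltnW.
have lt_qn : (q < n)%N by rewrite ltn_divLR // [(n * 2)%N]mulnC.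
apply: (pauli_stringN (k := q)) => // [j _ ne_jq|].
  case: (ltnP j q) => [lt_jq | le_qj]; first by rewrite (leq_trans lt_jq le_qr).
  by rewrite (negbTE ne_jq) /PauliI mul1mx mulmx1.
rewrite ltnn eqxx; have [lt_qr | le_rq] := ltnP q r.
  by case: (odd mu); [exact: PauliYZ | exact: PauliXZ].
have eq_qr : q = r by apply/eqP; rewrite eqn_leq le_qr le_rq.
rewrite -eq_qr eqxx.
(* same qubit q: mu = 2q + odd mu < nu = 2q + odd nu, so c mu acts as X_q and c nu as Y_q *)
have odd_lt : (odd mu < odd nu)%N.
  move: lt_mu_nu; rewrite -[X in (X < _)%N](odd_double_half mu).
  by rewrite -[X in (_ < X)%N](odd_double_half nu) -!divn2 -/q -/r -eq_qr ltn_add2r.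
by case: (odd mu) (odd nu) odd_lt => [] [] // _; exact: PauliXY.
Qed.

Lemma majorana_anticomm mu nu : mu != nu -> c mu *m c nu = - (c nu *m c mu).
Proof.
move=> ne_mu_nu; have [lt|gt|eq] := ltngtP mu nu.
- exact: majorana_anticomm_lt.
- by rewrite (majorana_anticomm_lt gt) opprK.
- by rewrite (val_inj eq) eqxx in ne_mu_nu.
Qed.

Lemma majorana_acomm mu nu :
  c mu *m c nu + c nu *m c mu = (2 * (mu == nu)%:R) *: 1%:M.
Proof.
have [->|ne_mu_nu] := eqVneq mu nu; first by rewrite majorana_sqr mulr1 scaler_nat.
by rewrite majorana_anticomm // addNr mulr0 scale0r.
Qed.

Lemma adj_majorana mu : adj (c mu) = c mu.
Proof.
rewrite /majorana adj_pauli_string; apply: eq_pauli_string => j _.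
case: ifP => _; first exact: adj_PauliZ.
case: ifP => _; last exact: adj_PauliI.
by case: (odd mu); [exact: adj_PauliY | exact: adj_PauliX].
Qed.

Lemma majorana_config_uniq s : majorana_config s -> uniq s.
Proof. by apply: sorted_uniq => [y x z|x]; [apply: ltn_trans | apply: ltnn]. Qed.

Lemma config_op_unitary s : adj (config_op C s) *m config_op C s = 1%:M.
Proof.
elim: s => [|mu s IHs] /=; first by rewrite adj_scalar1 mul1mx.
rewrite adj_mulmx adj_majorana mulmxA -[_ *m c mu *m c mu]mulmxA.
by rewrite majorana_sqr mulmx1.
Qed.

Lemma config_op_majorana s nu :
  config_op C s *m c nu = (-1) ^+ (size s + count_mem nu s) *: (c nu *m config_op C s).
Proof.
elim: s => [|mu s IHs] /=; first by rewrite mulmx1 mul1mx scale1r.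
rewrite -mulmxA IHs -scalemxAr !mulmxA.
have [->|ne_mu_nu] /= := eqVneq mu nu.
  by rewrite majorana_sqr mul1mx add1n addSn addnS !exprS !mulN1r opprK.
rewrite majorana_anticomm 1?eq_sym // mulNmx scalerN add0n addSn exprS mulN1r.
by rewrite scaleNr opprK.
Qed.

Lemma adj_config_op s : uniq s ->
  adj (config_op C s) = (-1) ^+ 'C(size s, 2) *: config_op C s.
Proof.
elim: s => [|mu s IHs] /=; first by rewrite adj_scalar1 scale1r.
case/andP=> mu_notin_s /IHs adj_s.
rewrite adj_mulmx adj_majorana adj_s -scalemxAl config_op_majorana.
by rewrite (count_memPn mu_notin_s) addn0 scalerA -exprD binS bin1 addnC.
Qed.

Lemma herm_config_op_involutive (z : C) s : z^* * z = 1 ->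
  adj (z *: config_op C s) = z *: config_op C s ->
  (z *: config_op C s) *m (z *: config_op C s) = 1%:M.
Proof.
move=> unit_z herm; rewrite -{1}herm adj_scale -scalemxAl -scalemxAr scalerA unit_z.
by rewrite scale1r config_op_unitary.
Qed.

Lemma herm_config_op_phase (z : C) s : uniq s -> z^* * z = 1 ->
  adj (z *: config_op C s) = z *: config_op C s -> z * z * (-1) ^+ 'C(size s, 2) = 1.
Proof.
move=> uniq_s unit_z; rewrite adj_scale adj_config_op // scalerA => herm.
have : (z^* * (-1) ^+ 'C(size s, 2) - z) *: (1%:M : 'M[C]_(dim2 n)) = 0.
  by rewrite -(config_op_unitary s) scalemxAr scalerBl herm subrr mulmx0.
move/eqP; rewrite scalemx_eq0 subr_eq0 => /orP[/eqP zE | /eqP one0].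
  by rewrite -{2}zE mulrA [z * _]mulrC unit_z mul1r -expr2 sqrr_sign.
have := congr1 mxtrace one0; rewrite mxtrace1 mxtrace0 => /eqP.
by rewrite pnatr_eq0 dim2E expn_eq0.
Qed.

End Majorana.

Section RemNth.
Variable T : Type.

Definition rem_nth (j : nat) (s : seq T) : seq T := take j s ++ drop j.+1 s.

Lemma size_rem_nth j s : (j < size s)%N -> size (rem_nth j s) = (size s).-1.
Proof. by move=> lt_js; rewrite size_cat size_takel ?size_drop; lia. Qed.

Lemma nth_rem_nth x0 j s i : (j < size s)%N ->
  nth x0 (rem_nth j s) i = nth x0 s (bump j i).
Proof.
move=> lt_js; rewrite /rem_nth nth_cat size_takel ?(ltnW lt_js) // /bump.
case: (ltnP i j) => [lt_ij | le_ji]; first by rewrite nth_take.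
by rewrite nth_drop add1n addSn subnKC.
Qed.

End RemNth.

Section BilinearDot.
Variable R : comPzRingType.

Definition bdot N (x y : 'rV[R]_N) : R := (x *m y^T) 0 0.

Definition gram_mx N k (xs ys : seq 'rV[R]_N) : 'M[R]_k :=
  \matrix_(i < k, j < k) bdot (nth 0 xs i) (nth 0 ys j).

Lemma bdot_row N (w : 'M[R]_N) i j : bdot (row i w) (row j w) = (w *m w^T) i j.
Proof. by rewrite /bdot !mxE; apply: eq_bigr => l _; rewrite !mxE. Qed.

Lemma bdot_mulmx_orthogonal N (D : 'M[R]_N) x y :
  D *m D^T = 1%:M -> bdot (x *m D) (y *m D) = bdot x y.
Proof. by move=> orthD; rewrite /bdot trmx_mul mulmxA -(mulmxA x) orthD mulmx1. Qed.

End BilinearDot.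

Section MajoranaField.
Variables (C : numClosedFieldType) (n : nat).
Local Notation c := (@majorana C n).
Local Notation vec := 'rV[C]_(2 * n).
Implicit Types (x y : vec) (xs ys : seq vec).

Definition majorana_comb x : 'M[C]_(dim2 n) := \sum_nu x 0 nu *: c nu.

Definition majorana_prod xs : 'M[C]_(dim2 n) :=
  foldr (fun x M => majorana_comb x *m M) 1%:M xs.

Lemma majorana_prod_cat xs ys :
  majorana_prod (xs ++ ys) = majorana_prod xs *m majorana_prod ys.
Proof. by elim: xs => [|x xs IHxs] /=; rewrite ?mul1mx // IHxs mulmxA. Qed.

Lemma majorana_comb_acomm x y :
  majorana_comb x *m majorana_comb y + majorana_comb y *m majorana_comb x
  = (2 * bdot x y) *: 1%:M.
Proof.
have combM x' y' : majorana_comb x' *m majorana_comb y' =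
    \sum_mu \sum_nu (x' 0 mu * y' 0 nu) *: (c mu *m c nu).
  rewrite /majorana_comb mulmx_suml; apply: eq_bigr => mu _.
  rewrite -scalemxAl mulmx_sumr scaler_sumr; apply: eq_bigr => nu _.
  by rewrite -scalemxAr scalerA.
rewrite !combM [X in _ + X]exchange_big -big_split /= /bdot mxE mulr_sumr scaler_suml.
apply: eq_bigr => mu _; rewrite -big_split /=.
rewrite (bigD1 mu) //= big1 ?addr0 => [|nu ne_nu_mu].
  rewrite mulrC -scalerDr majorana_acomm eqxx scalerA mxE mulr1.
  by congr (_ *: _); ring.
rewrite [y 0 nu * _]mulrC -scalerDr majorana_acomm eq_sym (negbTE ne_nu_mu).
by rewrite mulr0 scale0r scaler0.
Qed.

Lemma majorana_comb_mul_prod x ys : majorana_comb x *m majorana_prod ys =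
  \sum_(j < size ys) ((-1) ^+ j * (2 * bdot x (nth 0 ys j))) *: majorana_prod (rem_nth j ys)
  + (-1) ^+ size ys *: (majorana_prod ys *m majorana_comb x).
Proof.
elim: ys => [|y ys IHys] /=; first by rewrite big_ord0 add0r scale1r mulmx1 mul1mx.
have swap_xy : majorana_comb x *m majorana_comb y
    = (2 * bdot x y) *: 1%:M - majorana_comb y *m majorana_comb x.
  by rewrite -majorana_comb_acomm addrK.
rewrite mulmxA swap_xy mulmxBl -scalemxAl mul1mx -[_ *m majorana_comb x *m _]mulmxA IHys.
rewrite big_ord_recl /= expr0 mul1r /rem_nth /= drop0.
rewrite mulmxDr mulmx_sumr opprD addrA; congr (_ + _ + _).
  rewrite -sumrN; apply: eq_bigr => j _.
  by rewrite -scalemxAr exprS mulN1r mulNr scaleNr.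
by rewrite -scalemxAr exprS mulN1r scaleNr mulmxA.
Qed.

Lemma mxtrace_majorana_comb_prod x ys : odd (size ys) ->
  \tr (majorana_comb x *m majorana_prod ys) =
  \sum_(j < size ys) ((-1) ^+ j * bdot x (nth 0 ys j)) * \tr (majorana_prod (rem_nth j ys)).
Proof.
(* by cyclicity the last summand has trace -tr (c(x) prod ys): twice the trace is the sum *)
move=> odd_ys; have := congr1 mxtrace (majorana_comb_mul_prod x ys).
rewrite mxtraceD mxtraceZ [\tr (majorana_prod ys *m _)]mxtrace_mulC.
rewrite -signr_odd odd_ys expr1 mulN1r raddf_sum /= => trE.
have two_neq0 : (2 : C) != 0 by rewrite pnatr_eq0.
apply: (mulIf two_neq0); rewrite mulr_natr mulr2n {1}trE addrNK mulr_suml.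
by apply: eq_bigr => j _; rewrite mxtraceZ; ring.
Qed.

Lemma mxtrace_majorana_prod_cat k xs ys :
  size xs = k -> size ys = k ->
  (forall i j, (i < k)%N -> (j < k)%N -> i != j -> bdot (nth 0 xs i) (nth 0 xs j) = 0) ->
  \tr (majorana_prod (xs ++ ys))
  = (-1) ^+ 'C(k, 2) * \tr (1%:M : 'M[C]_(dim2 n)) * \det (gram_mx k xs ys).
Proof.
elim: k xs ys => [|k IHk] xs ys size_xs size_ys orth_xs.
  by case: xs ys size_xs size_ys orth_xs => [|//] [|//] _ _ _; rewrite det_mx00 mul1r mulr1.
case: xs size_xs orth_xs => // x xs [size_xs] orth_xs.
have odd_size : odd (size (xs ++ ys)).
  by rewrite size_cat size_xs size_ys addnS addnn /= odd_double.
rewrite cat_cons /= mxtrace_majorana_comb_prod // size_cat size_xs size_ys big_split_ord /=.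
rewrite big1 ?add0r => [|j _]; last first.
  rewrite nth_cat size_xs ltn_ord.
  by rewrite (orth_xs 0%N j.+1) ?mulr0 ?mul0r ?ltnS.
rewrite (expand_det_row _ ord0) mulr_sumr; apply: eq_bigr => i _.
have nth_ys : nth 0 (xs ++ ys) (k + i) = nth 0 ys i.
  by rewrite nth_cat size_xs ltnNge leq_addr /= addKn.
have rem_ys : rem_nth (k + i) (xs ++ ys) = xs ++ rem_nth i ys.
  rewrite /rem_nth take_cat drop_cat size_xs ltnNge leq_addr /= -addnS ltnNge leq_addr /=.
  by rewrite !addKn catA.
have minor : row' ord0 (col' i (gram_mx k.+1 (x :: xs) ys)) = gram_mx k xs (rem_nth i ys).
  by apply/matrixP => a b; rewrite !mxE /= nth_rem_nth ?size_ys.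
rewrite nth_ys rem_ys (IHk _ _ size_xs) ?size_rem_nth ?size_ys //; last first.
  by move=> a b lt_ak lt_bk ne_ab; apply: (orth_xs a.+1 b.+1).
rewrite /cofactor minor !mxE /= add0n binS bin1 !exprD; ring.
Qed.

End MajoranaField.

Section Conjugation.
Variables (C : numClosedFieldType) (n : nat).
Implicit Types (s eta : seq 'I_(2 * n)).

Definition parity_mx eta : 'M[C]_(2 * n) :=
  diag_mx (\row_nu ((-1) ^+ (size eta + (nu \in eta)))).

Lemma parity_mxE eta :
  parity_mx eta = (-1) ^+ size eta *: (1%:M - 2 *: proj_modes C eta).
Proof.
apply/matrixP => i j; rewrite /parity_mx /proj_modes !mxE exprD.
have [->|ne_ij] := eqVneq i j; last by rewrite !mulr0n mulr0 subr0 mulr0.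
by case: (j \in eta); rewrite /= ?mulr1n ?mulr1; ring.
Qed.

Lemma parity_mx_orthogonal eta : parity_mx eta *m (parity_mx eta)^T = 1%:M.
Proof.
rewrite /parity_mx tr_diag_mx mulmx_diag; apply/matrixP => i j; rewrite !mxE.
by rewrite -exprD addnn -signr_odd odd_double.
Qed.

Lemma config_op_majorana_comb eta x : uniq eta ->
  config_op C eta *m majorana_comb x
  = majorana_comb (x *m parity_mx eta) *m config_op C eta.
Proof.
move=> uniq_eta; rewrite /majorana_comb mulmx_sumr mulmx_suml; apply: eq_bigr => nu _.
rewrite -scalemxAr config_op_majorana count_uniq_mem // scalerA mul_mx_diag !mxE.
by rewrite -scalemxAl.
Qed.

Lemma config_op_majorana_prod eta xs : uniq eta ->
  config_op C eta *m majorana_prod xs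
  = majorana_prod [seq x *m parity_mx eta | x <- xs] *m config_op C eta.
Proof.
move=> uniq_eta; elim: xs => [|x xs IHxs] /=; first by rewrite mulmx1 mul1mx.
by rewrite mulmxA config_op_majorana_comb // -mulmxA IHxs mulmxA.
Qed.

Lemma conj_config_op (U : 'M[C]_(dim2 n)) (u : 'M[C]_(2 * n)) :
  U *m adj U = 1%:M ->
  (forall mu, adj U *m majorana C mu *m U = \sum_nu u mu nu *: majorana C nu) ->
  forall s, adj U *m config_op C s *m U = majorana_prod [seq row mu u | mu <- s].
Proof.
move=> unitU match_u; elim=> [|mu s IHs] /=; first by rewrite mulmx1 (mulmx1C unitU).
have -> : adj U *m (majorana C mu *m config_op C s) *m U
    = (adj U *m majorana C mu *m U) *m (adj U *m config_op C s *m U).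
  by rewrite !mulmxA -[_ *m U *m adj U]mulmxA unitU mulmx1.
rewrite IHs match_u; congr (_ *m _).
by apply: eq_bigr => nu _; rewrite mxE.
Qed.

Lemma gram_mx_rows (u D : 'M[C]_(2 * n)) (x0 : 'I_(2 * n)) s :
  gram_mx (size s) [seq row mu u *m D | mu <- s] [seq row mu u | mu <- s]
  = rowsub_seq u s *m D *m (rowsub_seq u s)^T.
Proof.
apply/matrixP => i j; rewrite !mxE /bdot !(nth_map x0) // !mxE.
apply: eq_bigr => l _; rewrite !mxE (set_nth_default x0 l) //; congr (_ * _).
by apply: eq_bigr => m _; rewrite !mxE (set_nth_default x0 m).
Qed.

Lemma mxtrace_majorana_prod_rows (u D : 'M[C]_(2 * n)) (x0 : 'I_(2 * n)) s :
  u *m u^T = 1%:M -> D *m D^T = 1%:M -> uniq s ->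
  \tr (majorana_prod [seq row mu u *m D | mu <- s]
       *m majorana_prod [seq row mu u | mu <- s])
  = (-1) ^+ 'C(size s, 2) * \tr (1%:M : 'M[C]_(dim2 n))
    * \det (rowsub_seq u s *m D *m (rowsub_seq u s)^T).
Proof.
move=> orth_u orth_D uniq_s; rewrite -majorana_prod_cat -(gram_mx_rows _ _ x0).
apply: mxtrace_majorana_prod_cat; rewrite ?size_map // => i j lt_i lt_j ne_ij.
rewrite !(nth_map x0) // bdot_mulmx_orthogonal // bdot_row orth_u mxE.
by rewrite nth_uniq // (negbTE ne_ij).
Qed.

End Conjugation.

Theorem theorem1 (C : numClosedFieldType) (n : nat) (hn : (1 <= n)%N)
  (U : 'M[C]_(dim2 n)) (u : 'M[C]_(2 * n))
  (hU : adj U *m U = 1%:M)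
  (hu_real : forall i j, u i j \is Num.real)
  (hu_orth : u *m u^T = 1%:M)
  (hu_det : \det u = 1)
  (hmatch : forall mu : 'I_(2 * n),
     adj U *m majorana C mu *m U = \sum_(nu < 2 * n) u mu nu *: majorana C nu)
  (eta alpha : seq 'I_(2 * n))
  (heta : majorana_config eta) (halpha : majorana_config alpha)
  (a b : int)
  (A := 'i ^ a *: config_op C eta) (B := 'i ^ b *: config_op C alpha)
  (hA : adj A = A) (hB : adj B = B) :
  (2 ^+ (n + 2))^-1 * frob2 (commutator A (adj U *m B *m U))
  = 2^-1 * (1 + (-1) ^+ (size alpha * size eta + 1)%N *
       \det (rowsub_seq u alpha *m (1%:M - 2 *: proj_modes C eta)
             *m (rowsub_seq u alpha)^T)).
Proof.
have x0 : 'I_(2 * n) by exists 0%N; rewrite muln_gt0.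
have unitU : U *m adj U = 1%:M := mulmx1C hU.
have uniq_eta := majorana_config_uniq heta.
have uniq_alpha := majorana_config_uniq halpha.
have AA : A *m A = 1%:M := herm_config_op_involutive (ipow_unit C a) hA.
have BB : B *m B = 1%:M := herm_config_op_involutive (ipow_unit C b) hB.
set X := adj U *m B *m U.
set ws := [seq row mu u | mu <- alpha].
set vs := [seq row mu u *m parity_mx C eta | mu <- alpha].
have XE : X = 'i ^ b *: majorana_prod ws.
  by rewrite /X /B -scalemxAr -scalemxAl (conj_config_op unitU hmatch).
have AXA : A *m X *m A = 'i ^ b *: majorana_prod vs.
  have APA : A *m majorana_prod ws = majorana_prod vs *m A.
    by rewrite /A -scalemxAl config_op_majorana_prod // -map_comp scalemxAr.
  by clearbody A; rewrite XE -scalemxAr -scalemxAl APA -mulmxA AA mulmx1.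
rewrite frob2_commutator_involution ?adj_conj ?hB ?conj_involution //.
rewrite AXA XE -scalemxAl -scalemxAr scalerA mxtraceZ.
rewrite mxtrace_majorana_prod_rows ?parity_mx_orthogonal // !mulrA.
rewrite (herm_config_op_phase uniq_alpha (ipow_unit C b) hB) mul1r.
rewrite parity_mxE -scalemxAr -scalemxAl detZ -exprM mulnC.
rewrite mxtrace1 dim2E natrX !exprD expr1.
by field; rewrite expf_neq0 // pnatr_eq0.
Qed.
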